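(* Let $p$ be a prime and $R$ a local ring which is a finitely generated $\mathbb{Z}_p$-algebra and finitely generated as a $\mathbb{Z}_p$-module, with $\mathbb{Z}_p\subset R$ and residue field $\mathbb{F}_R$. For a finite $R$-module $M$ set $$d_M=\dim_{\mathbb{F}_R}\mathrm{Tor}^R_1(M,\mathbb{F}_R)-\dim_{\mathbb{F}_R}(M\otimes_R\mathbb{F}_R).$$ Then $d_M\geq 0$ for every finite $R$-module $M$. Moreover, $M\in T_R$ if and only if $d_M=0$.
   Context: $T_R$ denotes the set of (isomorphism classes of) finite $R$-modules that occur as the cokernel of some $R$-linear endomorphism of $R^N$, for some $N\geq 1$. *)

From mathcomp Require Import all_boot all_order all_algebra.
Set Implicit Arguments. Unset Strict Implicit. Unset Printing Implicit Defensive.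
Import GRing.Theory.
Local Open Scope ring_scope.

(* An element of Z_p is a compatible sequence of residues x n in [0, p^n). *)
Definition padic_seq (p : nat) (x : nat -> nat) : Prop :=
  forall n, (x n %% p ^ n = x n)%N /\ (x n.+1 %% p ^ n = x n)%N.

Definition Zpadic (p : nat) : Type := {x : nat -> nat | padic_seq p x}.

Lemma padic_add_proof p (x y : Zpadic p) :
  padic_seq p (fun n => (sval x n + sval y n) %% p ^ n)%N.
Proof.
case: x => x hx; case: y => y hy n /=; split; first by rewrite modn_mod.
rewrite (modn_dvdm _ (dvdn_exp2l p (leqnSn n))) -modnDm (hx n).2 (hy n).2.
by [].
Qed.

Lemma padic_mul_proof p (x y : Zpadic p) :
  padic_seq p (fun n => (sval x n * sval y n) %% p ^ n)%N.
Proof.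
case: x => x hx; case: y => y hy n /=; split; first by rewrite modn_mod.
rewrite (modn_dvdm _ (dvdn_exp2l p (leqnSn n))) -modnMm (hx n).2 (hy n).2.
by [].
Qed.

Lemma padic_one_proof p : padic_seq p (fun n => 1 %% p ^ n)%N.
Proof.
move=> n; split; first by rewrite modn_mod.
by rewrite (modn_dvdm _ (dvdn_exp2l p (leqnSn n))).
Qed.

Definition Zp_add p (x y : Zpadic p) : Zpadic p := exist _ _ (padic_add_proof x y).
Definition Zp_mul p (x y : Zpadic p) : Zpadic p := exist _ _ (padic_mul_proof x y).
Definition Zp_one p : Zpadic p := exist _ _ (padic_one_proof p).

Definition Zp_embedding (p : nat) (R : comUnitRingType) (iota : Zpadic p -> R) : Prop :=
  [/\ forall x y, iota (Zp_add x y) = iota x + iota y,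
      forall x y, iota (Zp_mul x y) = iota x * iota y,
      iota (Zp_one p) = 1 & injective iota].

Definition Zp_finite_module (p : nat) (R : comUnitRingType) (iota : Zpadic p -> R) : Prop :=
  exists (n : nat) (s : 'I_n -> R),
    forall r : R, exists c : 'I_n -> Zpadic p, r = \sum_(i < n) iota (c i) * s i.

Definition Zp_finite_algebra (p : nat) (R : comUnitRingType) (iota : Zpadic p -> R) : Prop :=
  exists (n : nat) (s : 'I_n -> R),
    forall r : R, exists (d : nat) (c : {ffun 'I_d -> Zpadic p}) (e : 'I_d -> 'I_n -> nat),
      r = \sum_(j < d) iota (c j) * \prod_(i < n) s i ^+ e j i.

(* R is local: the non-units form an ideal (the maximal ideal m);
   the residue field is F_R = R / m. *)
Definition local_ring (R : comUnitRingType) : Prop :=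
  forall x y : R, x \notin GRing.unit -> y \notin GRing.unit ->
    x + y \notin GRing.unit.

(* F_R-dimension of the subquotient U/W of an R-module V (with m U <= W <= U),
   via lifts: n elements of U whose images form an F_R-basis of U/W. *)
Definition res_dim (R : comUnitRingType) (V : lmodType R) (U W : V -> Prop)
    (n : nat) : Prop :=
  exists x : 'I_n -> V,
    [/\ forall i, U (x i),
        forall u, U u -> exists r : 'I_n -> R, W (u - \sum_(i < n) r i *: x i) &
        forall r : 'I_n -> R, W (\sum_(i < n) r i *: x i) ->
          forall i, r i \notin GRing.unit].

Definition mM (R : comUnitRingType) (M : lmodType R) (x : M) : Prop :=
  exists (k : nat) (s : 'I_k -> R) (y : 'I_k -> M),
    (forall j, s j \notin GRing.unit) /\ x = \sum_(j < k) s j *: y j.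

(* dim_{F_R} (M (x)_R F_R) = dim_{F_R} (M / m M) = n *)
Definition tensor_res_dim (R : comUnitRingType) (M : lmodType R) (n : nat) : Prop :=
  res_dim (fun _ : M => True) (@mM R M) n.

Definition finite_module (R : comUnitRingType) (M : lmodType R) : Prop :=
  exists s : seq M, forall x : M, x \in s.

Definition lincomb (R : comUnitRingType) (M : lmodType R) (b : nat)
    (g : 'I_b -> M) (u : 'cV[R]_b) : M :=
  \sum_(i < b) u i 0 *: g i.

(* R^c --B--> R^a --A--> R^b --g--> M --> 0 is exact
   (the start of a free resolution of M) *)
Definition free_resolution (R : comUnitRingType) (M : lmodType R) (a b c : nat)
    (g : 'I_b -> M) (A : 'M[R]_(b, a)) (B : 'M[R]_(a, c)) : Prop :=
  [/\ forall x : M, exists u : 'cV[R]_b, lincomb g u = x,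
      forall u : 'cV[R]_b, lincomb g u = 0 <-> exists v : 'cV[R]_a, u = A *m v &
      forall v : 'cV[R]_a, A *m v = 0 <-> exists w : 'cV[R]_c, v = B *m w].

Definition in_max_ideal_vec (R : comUnitRingType) (k : nat) (v : 'cV[R]_k) : Prop :=
  forall i, v i 0 \notin GRing.unit.

(* dim_{F_R} Tor_1^R(M, F_R) = n, computed as the first homology of the
   resolution tensored with F_R:  ker(A mod m) / im(B mod m). *)
Definition tor1_res_dim (R : comUnitRingType) (a b c : nat)
    (A : 'M[R]_(b, a)) (B : 'M[R]_(a, c)) (n : nat) : Prop :=
  res_dim (fun v : 'cV[R]_a => in_max_ideal_vec (A *m v))
          (fun v : 'cV[R]_a => exists (w : 'cV[R]_c) (z : 'cV[R]_a),
                                  in_max_ideal_vec z /\ v = B *m w + z) n.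

(* M in T_R : M is isomorphic to the cokernel of an endomorphism A of R^N, N >= 1 *)
Definition in_TR (R : comUnitRingType) (M : lmodType R) : Prop :=
  exists (N : nat) (A : 'M[R]_N) (g : 'I_N -> M),
    [/\ (0 < N)%N,
        forall x : M, exists u : 'cV[R]_N, lincomb g u = x &
        forall u : 'cV[R]_N, lincomb g u = 0 <-> exists v : 'cV[R]_N, u = A *m v].

(* Over the local ring R everything is computed in the residue field. For a
   presentation R^c -B-> R^a -A-> R^b -> M -> 0 one gets
   d_M = t - s = a - b - rank (B mod m). Any A with A B = 0 factors as
   A = (A S) T through R^k with k = a - rank (B mod m), by lifting a complement
   of the row space of B mod m. As M is finite, some N > 0 kills M, so
   A D = N for some D, and N ^ b <> 0 because Z_p embeds in R; a determinant
   count then forces k >= b, i.e. d_M >= 0, and when d_M = 0 the square matrix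
   A S presents M. Conversely, comparing a square presentation of M with the
   given one by Schanuel's trick yields a <= b + rank (B mod m). *)

From Pilot Require Import Defs.
From HB Require Import structures.
From mathcomp Require Import all_boot all_order all_algebra ring_quotient generic_quotient.
From mathcomp Require Import zify.
From Stdlib Require Import ProofIrrelevance FunctionalExtensionality.
Set Implicit Arguments. Unset Strict Implicit. Unset Printing Implicit Defensive.
Import GRing.Theory.
Local Open Scope ring_scope.

Fact natZp_proof p m : padic_seq p (fun n => m %% p ^ n)%N.
Proof.
move=> n; split; first by rewrite modn_mod.
by rewrite (modn_dvdm _ (dvdn_exp2l p (leqnSn n))).
Qed.

Definition natZp p m : Zpadic p := exist _ _ (natZp_proof p m).

Lemma Zp_ext p (x y : Zpadic p) : sval x =1 sval y -> x = y.
Proof.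
case: x y => [x hx] [y hy] /= /functional_extensionality eq_xy; subst y.
by rewrite (proof_irrelevance _ hx hy).
Qed.

Section ZpEmbedding.
Variables (p : nat) (R : comUnitRingType) (iota : Zpadic p -> R).
Hypothesis iota_emb : Zp_embedding iota.

Lemma Zp_embedding_nat m : iota (natZp p m) = m%:R.
Proof.
have [iotaD _ iota1 _] := iota_emb.
elim: m => [|m IHm].
  apply: (@addrI _ (iota (natZp p 0))); rewrite addr0 -iotaD.
  by congr iota; apply: Zp_ext => n /=; rewrite !mod0n.
have -> : natZp p m.+1 = Defs.Zp_add (natZp p m) (Zp_one p).
  by apply: Zp_ext => n /=; rewrite modnDm addn1.
by rewrite iotaD IHm iota1 mulrSr.
Qed.

Lemma Zp_embedding_natr_neq0 : (1 < p)%N -> forall m, (0 < m)%N -> m%:R != 0 :> R.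
Proof.
move=> p_gt1 m m_gt0; apply/eqP => m0.
have [_ _ _ iota_inj] := iota_emb.
have /(congr1 (fun x => sval x m)) /= : natZp p m = natZp p 0.
  by apply: iota_inj; rewrite !Zp_embedding_nat m0.
rewrite mod0n modn_small; last exact: ltn_expl.
by move=> m_eq0; rewrite m_eq0 in m_gt0.
Qed.

End ZpEmbedding.

Lemma finite_module_torsion (R : comUnitRingType) (M : lmodType R) :
  finite_module M -> exists2 N, (0 < N)%N & forall x : M, x *+ N = 0.
Proof.
case=> l meml; exists (size l)`!; first exact: fact_gt0.
move=> x; pose s := mkseq (fun i => x *+ i) (size l).+1.
have /(uniqPn 0) [i [j [ij js]]] : ~~ uniq s.
  by apply/negP => /uniq_leq_size/(_ (fun y _ => meml y)); rewrite size_mkseq ltnn.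
rewrite size_mkseq in js; rewrite !nth_mkseq // ?(ltn_trans ij js) // => xij.
have /dvdnP [q ->] : (j - i %| (size l)`!)%N.
  by rewrite dvdn_fact // subn_gt0 ij leq_subLR (leq_trans _ (leq_addl i _)).
by rewrite mulnC mulrnA mulrnBr ?xij ?subrr ?mul0rn // ltnW.
Qed.

Lemma exists_cols (T : Type) m n (P : 'I_n -> 'cV[T]_m -> Prop) :
  (forall j, exists v, P j v) -> exists X : 'M[T]_(m, n), forall j, P j (col j X).
Proof.
move=> /fin_all_exists [f Pf]; exists (\matrix_(i, j) f j i 0) => j.
suff -> : col j (\matrix_(i, j) f j i 0) = f j by [].
by apply/matrixP => i k; rewrite !mxE ord1.
Qed.

Section Lincomb.
Variables (R : comUnitRingType) (M : lmodType R) (b : nat) (g : 'I_b -> M).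

Fact lincomb_is_linear : linear (lincomb g).
Proof.
move=> k u v; rewrite /lincomb scaler_sumr -big_split.
by apply: eq_bigr => i _; rewrite !mxE scalerDl scalerA.
Qed.

HB.instance Definition _ :=
  GRing.isLinear.Build R 'cV[R]_b M _ (lincomb g) lincomb_is_linear.

Lemma lincombD u v : lincomb g (u + v) = lincomb g u + lincomb g v.
Proof. exact: linearD. Qed.

Lemma lincombB u v : lincomb g (u - v) = lincomb g u - lincomb g v.
Proof. exact: linearB. Qed.

Lemma lincombZ k u : lincomb g (k *: u) = k *: lincomb g u.
Proof. exact: linearZ. Qed.

Lemma lincomb_sumZ n (r : 'I_n -> R) (u : 'I_n -> 'cV[R]_b) :
  lincomb g (\sum_j r j *: u j) = \sum_j r j *: lincomb g (u j).
Proof. by rewrite linear_sum; apply: eq_bigr => j _; rewrite linearZ. Qed.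

Lemma lincomb_mul n (X : 'M[R]_(b, n)) (w : 'cV[R]_n) :
  lincomb g (X *m w) = lincomb (fun j => lincomb g (col j X)) w.
Proof.
rewrite /lincomb; under eq_bigr do rewrite mxE scaler_suml.
rewrite exchange_big; apply: eq_bigr => j _; rewrite scaler_sumr.
by apply: eq_bigr => i _; rewrite !mxE scalerA mulrC.
Qed.

Lemma lincomb_delta j : lincomb g (delta_mx j 0) = g j.
Proof.
rewrite /lincomb (bigD1 j) //= big1 ?addr0 => [|i /negPf ne].
  by rewrite mxE !eqxx scale1r.
by rewrite mxE ne scale0r.
Qed.

Lemma lincomb_lift n (h : 'I_n -> M) :
  (forall x, exists u, lincomb g u = x) ->
  exists X : 'M[R]_(b, n), forall u, lincomb g (X *m u) = lincomb h u.
Proof.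
move=> g_surj; have [X gX] := exists_cols (fun j => g_surj (h j)).
by exists X => u; rewrite lincomb_mul; apply: eq_bigr => j _; rewrite gX.
Qed.

End Lincomb.

Definition presents (R : comUnitRingType) (M : lmodType R) b n
    (g : 'I_b -> M) (A : 'M[R]_(b, n)) : Prop :=
  (forall x : M, exists u, lincomb g u = x) /\
  (forall u, lincomb g u = 0 <-> exists v, u = A *m v).

Lemma colspan_mulmx (R : pzRingType) m n p (X : 'M[R]_(m, n)) (Y : 'M[R]_(m, p)) :
  (forall v : 'cV_n, exists w : 'cV_p, X *m v = Y *m w) -> exists Q, X = Y *m Q.
Proof.
move=> XY; have [Q YQ] := exists_cols (fun j => XY (delta_mx j 0)).
exists Q; apply: trmx_inj; apply/row_matrixP => j.
by rewrite -!tr_col colE YQ !colE mulmxA.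
Qed.

Lemma mulmx_eq0 (R : pzRingType) m n (X : 'M[R]_(m, n)) :
  (forall v : 'cV_n, X *m v = 0) -> X = 0.
Proof.
move=> X0; apply: trmx_inj; apply/row_matrixP => j.
by rewrite -!tr_col colE X0 col0.
Qed.

Lemma det_mulmx_thin (R : comPzRingType) k b (P : 'M[R]_(b, k)) (Q : 'M_(k, b)) :
  (k < b)%N -> \det (P *m Q) = 0.
Proof.
move=> kb; move: P Q; rewrite -(subnKC kb) addSnnS => P Q.
have -> : P *m Q = row_mx P 0 *m col_mx Q (0 : 'M_((b - k.+1).+1, _)).
  by rewrite mul_row_col mul0mx addr0.
rewrite det_mulmx -det_tr tr_row_mx (expand_det_row _ (rshift k ord0)).
by rewrite big1 ?mul0r // => j _; rewrite col_mxEd trmx0 mxE mul0r.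
Qed.

Local Open Scope quotient_scope.

Section LocalRing.
Variable R : comUnitRingType.
Hypothesis R_local : local_ring R.

Definition nonunit : {pred R} := [pred x | x \notin GRing.unit].

Fact nonunit_idealr_closed : idealr_closed nonunit.
Proof.
split; rewrite ?inE ?unitr0 ?unitr1 // => a u v; rewrite !inE => u_nu v_nu.
by apply: R_local => //; rewrite unitrM negb_and u_nu orbT.
Qed.

HB.instance Definition _ := isIdealr.Build R nonunit nonunit_idealr_closed.

Definition residue := {ideal_quot nonunit}.
HB.instance Definition _ := GRing.ComNzRing.on residue.

Definition red (x : R) : residue := \pi x.

Lemma red_eq0 x : (red x == 0) = (x \notin GRing.unit).
Proof. by rewrite /red -pi_zeror -Quotient.idealrBE subr0 inE. Qed.

Lemma reprK_red (y : residue) : red (repr y) = y.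
Proof. exact: reprK. Qed.

Fact red_is_nmod_morphism : nmod_morphism red.
Proof. by split=> [|x y]; rewrite /red ?pi_zeror ?pi_addr. Qed.

Fact red_is_monoid_morphism : monoid_morphism red.
Proof. by split=> [|x y]; rewrite /red ?pi_oner ?pi_mulr. Qed.

HB.instance Definition _ :=
  GRing.isNmodMorphism.Build R residue red red_is_nmod_morphism.
HB.instance Definition _ :=
  GRing.isMonoidMorphism.Build R residue red red_is_monoid_morphism.

Definition residue_inv (y : residue) : residue := red (repr y)^-1.

Fact residue_mulVf (y : residue) : y != 0 -> residue_inv y * y = 1.
Proof.
move=> y_neq0; rewrite /residue_inv -{2}(reprK_red y) -rmorphM mulVr ?rmorph1 //.
by apply: contraR y_neq0; rewrite -red_eq0 reprK_red.
Qed.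

Fact residue_inv0 : residue_inv 0 = 0.
Proof. by apply/eqP; rewrite red_eq0 unitrV -red_eq0 reprK_red. Qed.

HB.instance Definition _ :=
  GRing.ComNzRing_isField.Build residue residue_mulVf residue_inv0.

Local Notation redmx := (map_mx red).

(* Row spaces in mxalgebra are spanned by rows, so column vectors are reduced
   and transposed. *)
Definition redv k (v : 'cV[R]_k) : 'rV[residue]_k := (redmx v)^T.

Definition liftmx m n (X : 'M[residue]_(m, n)) : 'M[R]_(m, n) := map_mx repr X.

Lemma liftmxK m n (X : 'M[residue]_(m, n)) : redmx (liftmx X) = X.
Proof. by apply/matrixP => i j; rewrite !mxE reprK_red. Qed.

Lemma in_max_ideal_vecP k (v : 'cV[R]_k) : in_max_ideal_vec v <-> redmx v = 0.
Proof.
split=> [v_nu | /matrixP v0 i]; last by rewrite -red_eq0; have := v0 i 0; rewrite !mxE => ->.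
by apply/matrixP => i j; rewrite !mxE ord1; apply/eqP; rewrite red_eq0.
Qed.

Lemma redvD k (v w : 'cV[R]_k) : redv (v + w) = redv v + redv w.
Proof. by rewrite /redv map_mxD linearD. Qed.

Lemma redvB k (v w : 'cV[R]_k) : redv (v - w) = redv v - redv w.
Proof. by rewrite /redv map_mxB linearB. Qed.

Lemma redv_mulmx k m (A : 'M[R]_(k, m)) (w : 'cV[R]_m) :
  redv (A *m w) = redv w *m (redmx A)^T.
Proof. by rewrite /redv map_mxM trmx_mul. Qed.

Lemma in_max_ideal_vec_sub_lift k m (A : 'M[R]_(k, m)) (v : 'cV[R]_k) D :
  redv v = D *m (redmx A)^T -> in_max_ideal_vec (v - A *m liftmx D^T).
Proof.
move=> defv; apply/in_max_ideal_vecP.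
by rewrite map_mxB map_mxM liftmxK -[redmx v]trmxK -/(redv v) defv trmx_mul trmxK subrr.
Qed.

Lemma redv_lincomb k n (x : 'I_n -> 'cV[R]_k) (r : 'I_n -> R) :
  redv (\sum_i r i *: x i) = (\row_i red (r i)) *m \matrix_(i < n) redv (x i).
Proof.
apply/rowP => j; rewrite !mxE summxE rmorph_sum.
by apply: eq_bigr => i _; rewrite !mxE rmorphM.
Qed.

Lemma res_dim_rank k m1 m2 (U W : 'cV[R]_k -> Prop)
    (Ub : 'M[residue]_(m1, k)) (Wb : 'M[residue]_(m2, k)) n :
  (forall v, U v -> (redv v <= Ub)%MS) ->
  (forall e : 'rV_k, (e <= Ub)%MS -> exists2 v, U v & redv v = e) ->
  (Wb <= Ub)%MS ->
  (forall v, W v <-> (redv v <= Wb)%MS) ->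
  res_dim U W n -> (n + \rank Wb)%N = \rank Ub.
Proof.
move=> UUb Ub_lift WbUb WWb [x [Ux x_span x_indep]].
pose X := \matrix_(i < n) redv (x i).
have X_indep (u : 'rV_n) : (u *m X <= Wb)%MS -> u = 0.
  move=> uXWb; pose r i := repr (u 0 i).
  have /x_indep r_nu : W (\sum_i r i *: x i).
    apply/WWb; rewrite redv_lincomb.
    suff -> : \row_i red (r i) = u by [].
    by apply/rowP => i; rewrite mxE reprK_red.
  apply/rowP => i; rewrite mxE -[u 0 i]reprK_red; apply/eqP.
  by rewrite red_eq0 r_nu.
have XUb : (X <= Ub)%MS by apply/row_subP => i; rewrite rowK; apply: UUb.
have UbXWb : (Ub <= X + Wb)%MS.
  apply/row_subP => i; have [v Uv <-] := Ub_lift _ (row_sub i Ub).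
  have [r /WWb Wr] := x_span v Uv.
  rewrite -(subrK (redv (\sum_i r i *: x i)) (redv v)) -redvB addrC.
  by rewrite addmx_sub_adds // redv_lincomb submxMl.
have XWb0 : (X :&: Wb)%MS = 0.
  have [D defXWb] := submxP (capmxSl X Wb).
  apply/row_matrixP => i; rewrite row0 defXWb row_mul (X_indep (row i D)) ?mul0mx //.
  by rewrite -row_mul -defXWb (submx_trans (row_sub _ _)) // capmxSr.
have rankX : \rank X = n.
  apply/eqP; rewrite -[_ == _]/(row_free X) -kermx_eq0; apply/eqP.
  apply/row_matrixP => i; rewrite row0 (X_indep (row i (kermx X))) //.
  by rewrite -row_mul mulmx_ker row0 sub0mx.
have /eqmxP XWb_eq : (X + Wb == Ub)%MS by rewrite UbXWb addsmx_sub XUb WbUb.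
by rewrite -XWb_eq mxrank_disjoint_sum // rankX.
Qed.

Lemma mM_lincombP (M : lmodType R) a b (g : 'I_b -> M) (A : 'M[R]_(b, a)) v :
  presents g A -> mM (lincomb g v) <-> (redv v <= (redmx A)^T)%MS.
Proof.
move=> [g_surj g_ker]; split.
  case=> k [r [y [r_nu gv]]].
  have [w gw] := fin_all_exists (fun j => g_surj (y j)).
  have /g_ker [z defz] : lincomb g (v - \sum_j r j *: w j) = 0.
    by rewrite lincombB lincomb_sumZ; under eq_bigr do rewrite gw; rewrite gv subrr.
  rewrite -(subrK (\sum_j r j *: w j) v) defz redvD redv_lincomb.
  have -> : \row_j red (r j) = 0.
    by apply/rowP => j; rewrite !mxE; apply/eqP; rewrite red_eq0.
  by rewrite mul0mx addr0 redv_mulmx submxMl.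
case/submxP => D /in_max_ideal_vec_sub_lift v_nu.
have gA : lincomb g (A *m liftmx D^T) = 0 by apply/g_ker; eexists.
rewrite -(subrK (A *m liftmx D^T) v) lincombD gA addr0.
by exists b, (fun i => (v - A *m liftmx D^T) i 0), g.
Qed.

Lemma tensor_res_dim_rank (M : lmodType R) a b (g : 'I_b -> M) (A : 'M[R]_(b, a)) s :
  presents g A -> tensor_res_dim M s -> (s + \rank (redmx A))%N = b.
Proof.
move=> g_presents [x [_ x_span x_indep]]; have [g_surj _] := g_presents.
rewrite -mxrank_tr -[RHS](mxrank1 residue b).
apply: (@res_dim_rank _ _ _ (fun _ => True) (fun v => mM (lincomb g v))).
- by move=> v _; rewrite submx1.
- by move=> e _; exists (liftmx e^T); rewrite // /redv liftmxK trmxK.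
- by rewrite submx1.
- by move=> v; apply: mM_lincombP.
have [u gu] := fin_all_exists (fun i => g_surj (x i)).
exists u; split=> // [v _ | r].
  have [r xr] := x_span (lincomb g v) I; exists r.
  by rewrite lincombB lincomb_sumZ; under eq_bigr do rewrite gu.
by rewrite lincomb_sumZ; under eq_bigr do rewrite gu; exact: x_indep.
Qed.

Lemma tor1_res_dim_rank a b c (A : 'M[R]_(b, a)) (B : 'M[R]_(a, c)) t :
  A *m B = 0 -> tor1_res_dim A B t ->
  (t + \rank (redmx B) + \rank (redmx A))%N = a.
Proof.
move=> AB0 t_dim; rewrite -[RHS](subnK (rank_leq_col (redmx A))); congr addn.
rewrite -(mxrank_tr (redmx A)) -mxrank_ker -(mxrank_tr (redmx B)).
apply: (res_dim_rank _ _ _ _ t_dim).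
- move=> v /in_max_ideal_vecP Av_nu.
  by rewrite sub_kermx /redv -trmx_mul -map_mxM Av_nu trmx0.
- move=> e; rewrite sub_kermx => /eqP eA0; exists (liftmx e^T); last first.
    by rewrite /redv liftmxK trmxK.
  by apply/in_max_ideal_vecP; rewrite map_mxM liftmxK -[redmx A]trmxK -trmx_mul eA0 trmx0.
- by rewrite sub_kermx -trmx_mul -map_mxM AB0 map_mx0 trmx0.
- move=> v; split.
  + case=> w [z [/in_max_ideal_vecP z_nu ->]].
    by rewrite redvD {2}/redv z_nu trmx0 addr0 redv_mulmx submxMl.
  + case/submxP => D /in_max_ideal_vec_sub_lift v_nu.
    by exists (liftmx D^T), (v - B *m liftmx D^T); split; rewrite // addrC subrK.
Qed.

Lemma unitmx_red n (E : 'M[R]_n) : (E \in unitmx) = (redmx E \in unitmx).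
Proof. by rewrite !unitmxE det_map_mx unitfE red_eq0 negbK. Qed.

(* Lift a complement [Cb] of the row space of the reduction of [B^T]: the lifted
   splitting [E := S *m T0 + B *m H] of the identity reduces to [1], hence is
   invertible, and [A] kills its second summand. *)
Lemma mulmx_factor_rank_compl a b c (A : 'M[R]_(b, a)) (B : 'M[R]_(a, c)) :
  A *m B = 0 -> exists k (S : 'M[R]_(a, k)) (T : 'M[R]_(k, a)),
    (k + \rank (redmx B))%N = a /\ A = A *m S *m T.
Proof.
move=> AB0; pose Bt := (redmx B)^T; pose Cb := row_base (Bt^C)%MS.
exists (\rank (Bt^C)%MS).
have rank_compl : (\rank (Bt^C)%MS + \rank (redmx B))%N = a.
  by rewrite mxrank_compl -(mxrank_tr (redmx B)) subnK // rank_leq_col.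
have full : (1%:M <= col_mx Cb Bt)%MS.
  have : (1%:M <= Bt + Bt^C)%MS by rewrite sub1mx addsmx_compl_full.
  by move/submx_trans; apply; rewrite -addsmxE addsmxC addsmxS // eq_row_base.
have [D defD] := submxP full.
have split1 : 1%:M = Cb^T *m (lsubmx D)^T + redmx B *m (rsubmx D)^T.
  by rewrite -trmx1 defD -[D]hsubmxK mul_row_col linearD /= !trmx_mul trmxK !hsubmxK.
pose S := liftmx Cb^T; pose T0 := liftmx (lsubmx D)^T; pose H := liftmx (rsubmx D)^T.
pose E := S *m T0 + B *m H.
have E_unit : E \in unitmx.
  by rewrite unitmx_red map_mxD !map_mxM !liftmxK -split1 unitmx1.
have AE : A *m E = A *m S *m T0.
  by rewrite mulmxDr (mulmxA A B) AB0 mul0mx addr0 mulmxA.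
by exists S, (T0 *m invmx E); rewrite mulmxA -AE mulmxK.
Qed.

(* Reducing [1 - P *m Q = B2 *m H] modulo the maximal ideal, where [A2 = C *m Q]
   and [C = A2 *m P], writes the identity of rank [a2] as a sum of matrices of
   ranks at most [n] and [\rank (redmx B2)]. *)
Lemma rank_bound_same_image m a2 c2 n (A2 : 'M[R]_(m, a2)) (B2 : 'M[R]_(a2, c2))
    (C : 'M[R]_(m, n)) :
  (forall v : 'cV_a2, A2 *m v = 0 -> exists w : 'cV_c2, v = B2 *m w) ->
  (forall v : 'cV_a2, exists y : 'cV_n, A2 *m v = C *m y) ->
  (forall y : 'cV_n, exists v : 'cV_a2, C *m y = A2 *m v) ->
  (a2 <= n + \rank (redmx B2))%N.
Proof.
move=> kerA2 A2C CA2.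
have [Q defA2] := colspan_mulmx A2C; have [P defC] := colspan_mulmx CA2.
have [H defH] : exists H, 1%:M - P *m Q = B2 *m H.
  apply: colspan_mulmx => v; apply: kerA2.
  by rewrite mulmxA mulmxBr mulmx1 mulmxA -defC -defA2 subrr mul0mx.
have split1 : 1%:M = redmx P *m redmx Q + redmx B2 *m redmx H.
  by rewrite -!map_mxM -map_mxD -defH addrC subrK map_mx1.
rewrite -{1}[a2](mxrank1 residue) split1 (leq_trans (mxrank_add _ _)) // leq_add //.
  exact: leq_trans (mxrankM_maxr _ _) (rank_leq_row _).
exact: mxrankM_maxl.
Qed.

Section Presentation.
Variables (M : lmodType R) (a b c : nat) (g : 'I_b -> M).
Variables (A : 'M[R]_(b, a)) (B : 'M[R]_(a, c)).
Hypothesis g_presents : presents g A.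
Hypothesis kerA : forall v : 'cV_a, A *m v = 0 <-> exists w : 'cV_c, v = B *m w.

Lemma presentation_mulmx0 : A *m B = 0.
Proof. by apply: mulmx_eq0 => w; rewrite -mulmxA; apply/kerA; exists w. Qed.

Lemma finite_presentation_scalar :
  finite_module M -> exists2 N, (0 < N)%N & exists D : 'M[R]_(a, b), A *m D = N%:R%:M.
Proof.
have [_ g_ker] := g_presents.
case/finite_module_torsion=> N N_gt0 NM0; exists N => //.
have NA j : exists v : 'cV_a, A *m v = N%:R *: delta_mx j 0.
  have [v ->] : exists v : 'cV_a, N%:R *: delta_mx j 0 = A *m v.
    by apply/g_ker; rewrite lincombZ lincomb_delta scaler_nat NM0.
  by exists v.
have [D AD] := exists_cols NA; exists D.
apply: trmx_inj; apply/row_matrixP => j.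
by rewrite -!tr_col colE -mulmxA -colE AD colE mul_scalar_mx.
Qed.

(* Schanuel's trick: both block matrices have image [{(x, y) | g x = g' y}], and
   the kernel of [A2] is that of [A]. *)
Lemma in_TR_rank : in_TR M -> (a <= b + \rank (redmx B))%N.
Proof.
have [g_surj g_ker] := g_presents.
case=> N [A' [g' [_ g'_surj g'_ker]]].
have [X g'X] := lincomb_lift g g'_surj.
have [Y gY] := lincomb_lift g' g_surj.
pose A2 := block_mx A Y 0 1%:M; pose C := block_mx 1%:M 0 X A'.
have kerA2 (v : 'cV_(a + N)) : A2 *m v = 0 -> exists w, v = col_mx B (0 : 'M_(N, c)) *m w.
  rewrite -[v]vsubmxK mul_block_col !mul0mx !mul1mx add0r -col_mx0.
  case/eq_col_mx=> Av1 v2_0; rewrite v2_0 mulmx0 addr0 in Av1.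
  by have [w ->] := (kerA _).1 Av1; exists w; rewrite v2_0 mul_col_mx mul0mx.
have A2C (v : 'cV_(a + N)) : exists y : 'cV_(b + N), A2 *m v = C *m y.
  rewrite -[v]vsubmxK mul_block_col !mul0mx add0r mul1mx.
  set y1 := A *m usubmx v + Y *m dsubmx v.
  have /g'_ker [y2 y2_eq] : lincomb g' (dsubmx v - X *m y1) = 0.
    have gAv : lincomb g (A *m usubmx v) = 0 by apply/g_ker; exists (usubmx v).
    by rewrite lincombB g'X lincombD gY gAv add0r subrr.
  exists (col_mx y1 y2).
  by rewrite mul_block_col !mul1mx mul0mx addr0 -y2_eq addrC subrK.
have CA2 (y : 'cV_(b + N)) : exists v : 'cV_(a + N), C *m y = A2 *m v.
  rewrite -[y]vsubmxK mul_block_col !mul1mx !mul0mx addr0.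
  set v2 := X *m usubmx y + A' *m dsubmx y.
  have /g_ker [v1 v1_eq] : lincomb g (usubmx y - Y *m v2) = 0.
    have g'A'y : lincomb g' (A' *m dsubmx y) = 0 by apply/g'_ker; exists (dsubmx y).
    by rewrite lincombB gY lincombD g'X g'A'y addr0 subrr.
  exists (col_mx v1 v2).
  by rewrite mul_block_col mul0mx mul1mx add0r -v1_eq subrK.
have := rank_bound_same_image kerA2 A2C CA2.
by rewrite map_col_mx map_mx0 -addsmxE addsmx0 addnAC leq_add2r.
Qed.

(* [A = (A *m S) *m T] with [A *m S] square; since [in_TR] asks for [N >= 1],
   the zero module is presented by [1 : R -> R] instead. *)
Lemma in_TR_of_rank : a = (b + \rank (redmx B))%N -> in_TR M.
Proof.
have [g_surj g_ker] := g_presents.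
move=> a_eq; have [k [S [T [k_eq defA]]]] := mulmx_factor_rank_compl presentation_mulmx0.
have kb : k = b by lia.
subst k; case: (posnP b) => [b0 | b_gt0].
  have M0 (x : M) : x = 0.
    have [u <-] := g_surj x; rewrite /lincomb big1 // => i _.
    by exfalso; move: (ltn_ord i); rewrite [X in (_ < X)%N]b0.
  exists 1%N, 1%:M, (fun=> 0); split=> // [x | u].
    by exists 0; rewrite (M0 x); apply: M0.
  by split=> _; [exists u; rewrite mul1mx | apply: M0].
exists b, (A *m S), g; split=> // u; rewrite g_ker.
split=> -[v ->]; last by exists (S *m v); rewrite mulmxA.
by exists (T *m v); rewrite mulmxA -defA.
Qed.

Hypothesis natr_neq0 : forall n, (0 < n)%N -> n%:R != 0 :> R.

(* [A *m D = N%:R%:M] has determinant [N ^ b != 0], which is impossible if [A]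
   factors through fewer than [b] coordinates. *)
Lemma finite_presentation_rank : finite_module M -> (b + \rank (redmx B) <= a)%N.
Proof.
case/finite_presentation_scalar=> N N_gt0 [D AD].
have [k [S [T [k_eq defA]]]] := mulmx_factor_rank_compl presentation_mulmx0.
rewrite -[X in (_ <= X)%N]k_eq leq_add2r leqNgt; apply/negP => kb.
have := det_mulmx_thin (A *m S) (T *m D) kb.
rewrite mulmxA -defA AD det_scalar -natrX.
by apply/eqP/natr_neq0; rewrite expn_gt0 N_gt0.
Qed.

End Presentation.

End LocalRing.

Theorem lemma2p1 (p : nat) (R : comUnitRingType) (iota : Zpadic p -> R) :
  prime p -> Zp_embedding iota -> Zp_finite_algebra iota ->
  Zp_finite_module iota -> local_ring R ->
  forall (M : lmodType R), finite_module M ->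
  forall (a b c : nat) (g : 'I_b -> M) (A : 'M[R]_(b, a)) (B : 'M[R]_(a, c)),
    free_resolution g A B ->
    forall t s : nat, tor1_res_dim A B t -> tensor_res_dim M s ->
      (s <= t)%N /\ (in_TR M <-> t = s).
Proof.
move=> p_prime iota_emb _ _ R_local M M_fin a b c g A B [g_surj g_ker kerA] t s t_dim s_dim.
have g_pres : presents g A by split.
have natr_neq0 := Zp_embedding_natr_neq0 iota_emb (prime_gt1 p_prime).
have AB0 := presentation_mulmx0 kerA.
have s_eq := tensor_res_dim_rank R_local g_pres s_dim.
have t_eq := tor1_res_dim_rank R_local AB0 t_dim.
have rank_lower := finite_presentation_rank R_local g_pres kerA natr_neq0 M_fin.
split; first lia.
split=> [/(in_TR_rank R_local g_pres kerA) | ts]; first lia.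
by apply: (in_TR_of_rank g_pres kerA); lia.
Qed.
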